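(* Let $R$ be a commutative ring, $n\ge 1$, $I$ an $n$-absorbing ideal of $R$, and $k$ an integer with $0\le k\le n$. Suppose that for every family $I_1,\dots,I_{n+1}$ of u-ideals of $R$ such that $I_1\cdots I_{n+1}\subseteq I$ and at least $k+1$ of the $I_j$ are principal ideals, $I$ contains the product of some $n$ of the $I_j$'s. Then the same holds with $k+1$ replaced by $k$: for every family $I_1,\dots,I_{n+1}$ of u-ideals of $R$ such that $I_1\cdots I_{n+1}\subseteq I$ and at least $k$ of the $I_j$ are principal, $I$ contains the product of some $n$ of the $I_j$'s.
   Context: All rings are commutative with identity $1\neq 0$. An ideal $I$ of $R$ is $n$-absorbing if whenever $x_1,\dots,x_{n+1}\in R$ and $x_1x_2\cdots x_{n+1}\in I$, the product of some $n$ of the $x_i$'s lies in $I$. An ideal $J$ of $R$ is a u-ideal if whenever $J\subseteq J_1\cup\cdots\cup J_m$ for finitely many ideals $J_1,\dots,J_m$ of $R$, then $J\subseteq J_i$ for some $i$. *)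

From mathcomp Require Import all_boot all_algebra.
Set Implicit Arguments. Unset Strict Implicit. Unset Printing Implicit Defensive.
Import GRing.Theory.
Local Open Scope ring_scope.

Section IdealDefs.
Variable R : comNzRingType.

Definition is_ideal (I : R -> Prop) : Prop :=
  [/\ I 0, (forall x y, I x -> I y -> I (x + y)) & (forall r x, I x -> I (r * x))].

Definition subideal (I J : R -> Prop) : Prop := forall x, I x -> J x.

Definition gen_ideal (S : R -> Prop) : R -> Prop :=
  fun x => forall J, is_ideal J -> subideal S J -> J x.

Definition prod_ideals (m : nat) (P : pred 'I_m) (F : 'I_m -> R -> Prop)
  : R -> Prop :=
  gen_ideal (fun y => exists x : 'I_m -> R,
                (forall j, P j -> F j (x j)) /\ y = \prod_(j | P j) x j).

Definition n_absorbing (n : nat) (I : R -> Prop) : Prop :=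
  is_ideal I /\
  forall x : 'I_n.+1 -> R, I (\prod_j x j) ->
    exists i : 'I_n.+1, I (\prod_(j | j != i) x j).

Definition u_ideal (J : R -> Prop) : Prop :=
  is_ideal J /\
  forall (m : nat) (Js : 'I_m -> R -> Prop),
    (forall i, is_ideal (Js i)) ->
    (forall x, J x -> exists i, Js i x) ->
    exists i, subideal J (Js i).

Definition principal (J : R -> Prop) : Prop :=
  exists a : R, forall x, J x <-> exists r : R, x = r * a.

Definition absorbs_uideals (n p : nat) (I : R -> Prop) : Prop :=
  forall F : 'I_n.+1 -> R -> Prop,
    (forall j, u_ideal (F j)) ->
    (exists S : {set 'I_n.+1}, p <= #|S| /\ forall j, j \in S -> principal (F j))%N ->
    subideal (prod_ideals predT F) I ->
    exists i : 'I_n.+1, subideal (prod_ideals (fun j => j != i) F) I.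

End IdealDefs.

From mathcomp Require Import all_boot all_algebra.
From Stdlib Require Import Classical.
Set Implicit Arguments. Unset Strict Implicit. Unset Printing Implicit Defensive.
Import GRing.Theory.
Local Open Scope ring_scope.

(* Let I_1, ..., I_{n+1} be u-ideals with product in I, at least k
   of them principal (if k+1 are, the hypothesis applies directly), and
   let I_{j0} be a non-principal one.  If the product of the I_j (j <> j0)
   lies in I we are done.  Otherwise, for each x in I_{j0}, replacing I_{j0}
   by the principal ideal Rx gives a family of u-ideals (principal ideals are
   u-ideals) with k+1 principal members and product still in I; so some n of
   them have product in I, and the omitted index i cannot be j0.  Hence x lies
   in the colon ideal (I : prod_{j <> i, j0} I_j).  Thus I_{j0} is covered by
   the n colon ideals indexed by i <> j0; since it is a u-ideal it lies in one
   of them, which says exactly that the product of the I_j (j <> i) is in I. *)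

Section Ideals.
Variable R : comNzRingType.
Implicit Types (I J S : R -> Prop) (x y : R).

Lemma gen_ideal_is_ideal S : is_ideal (gen_ideal S).
Proof.
split; first by move=> J [J0 _ _].
- by move=> x y Sx Sy J iJ sSJ; case: (iJ) => _ JD _; apply: JD; [apply: Sx|apply: Sy].
- by move=> r x Sx J iJ sSJ; case: (iJ) => _ _ JM; apply: JM; apply: Sx.
Qed.

Lemma gen_ideal_gen S y : S y -> gen_ideal S y.
Proof. by move=> Sy J _ sSJ; apply: sSJ. Qed.

Lemma gen_ideal_min S J : is_ideal J -> subideal S J -> subideal (gen_ideal S) J.
Proof. by move=> iJ sSJ x; apply. Qed.

Section Products.
Variables (m : nat) (P : pred 'I_m).

Lemma prod_ideals_gen (F : 'I_m -> R -> Prop) (x : 'I_m -> R) :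
  (forall j, P j -> F j (x j)) -> prod_ideals P F (\prod_(j | P j) x j).
Proof. by move=> Fx; apply: gen_ideal_gen; exists x. Qed.

Lemma prod_ideals_sub (F : 'I_m -> R -> Prop) I : is_ideal I ->
  (forall x : 'I_m -> R, (forall j, P j -> F j (x j)) -> I (\prod_(j | P j) x j)) ->
  subideal (prod_ideals P F) I.
Proof. by move=> iI genI; apply: gen_ideal_min => // _ [x [Fx ->]]; apply: genI. Qed.

Lemma prod_ideals_mono (F G : 'I_m -> R -> Prop) :
  (forall j, P j -> subideal (G j) (F j)) ->
  subideal (prod_ideals P G) (prod_ideals P F).
Proof.
move=> sGF; apply: prod_ideals_sub; first exact: gen_ideal_is_ideal.
by move=> x Gx; apply: prod_ideals_gen => j Pj; apply: sGF; last apply: Gx.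
Qed.

(* The colon ideal (I : prod_{j | P j} F j), described elementwise: y such
   that y times any product of elements of the F j lies in I. *)
Definition prod_colon I (F : 'I_m -> R -> Prop) : R -> Prop :=
  fun y => forall x : 'I_m -> R,
    (forall j, P j -> F j (x j)) -> I (y * \prod_(j | P j) x j).

Lemma prod_colon_is_ideal I (F : 'I_m -> R -> Prop) :
  is_ideal I -> is_ideal (prod_colon I F).
Proof.
case=> I0 ID IM; split.
- by move=> x _; rewrite mul0r.
- by move=> y z Hy Hz x Fx; rewrite mulrDl; apply: ID; [apply: Hy|apply: Hz].
- by move=> r y Hy x Fx; rewrite -mulrA; apply: IM; apply: Hy.
Qed.

End Products.

Definition ideal_of x : R -> Prop := fun z => exists r, z = r * x.

Lemma ideal_of_is_ideal x : is_ideal (ideal_of x).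
Proof.
split; first by exists 0; rewrite mul0r.
- by move=> a b [r1 ->] [r2 ->]; exists (r1 + r2); rewrite mulrDl.
- by move=> a b [r ->]; exists (a * r); rewrite mulrA.
Qed.

Lemma ideal_of_principal x : principal (ideal_of x).
Proof. by exists x. Qed.

Lemma ideal_of_sub x J : is_ideal J -> J x -> subideal (ideal_of x) J.
Proof. by move=> [_ _ JM] Jx _ [r ->]; apply: JM. Qed.

(* Principal ideals are u-ideals: an ideal among a finite cover that contains
   the generator x contains all of Rx. *)
Lemma ideal_of_u_ideal x : u_ideal (ideal_of x).
Proof.
split; first exact: ideal_of_is_ideal.
move=> m Js iJs cover.
have [i Jix] := cover x (ex_intro _ 1 (esym (mul1r x))).
by exists i; apply: ideal_of_sub.
Qed.

Section Replace.
Variables (n : nat) (j0 : 'I_n.+1).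

Definition replace_at (F : 'I_n.+1 -> R -> Prop) (G : R -> Prop) :
  'I_n.+1 -> R -> Prop := fun j => if j == j0 then G else F j.

Lemma prod_replace_omit (F : 'I_n.+1 -> R -> Prop) G :
  subideal (prod_ideals (fun j => j != j0) F)
           (prod_ideals (fun j => j != j0) (replace_at F G)).
Proof. by apply: prod_ideals_mono => j /negbTE nj0; rewrite /replace_at nj0. Qed.

Lemma prod_replace_sub (F : 'I_n.+1 -> R -> Prop) G :
  subideal G (F j0) ->
  subideal (prod_ideals predT (replace_at F G)) (prod_ideals predT F).
Proof.
by move=> sGF; apply: prod_ideals_mono => j _; rewrite /replace_at; case: eqP => [->|_ x].
Qed.

Lemma replace_omit_colon (F : 'I_n.+1 -> R -> Prop) I x (i : 'I_n.+1) :
  i != j0 ->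
  subideal (prod_ideals (fun j => j != i) (replace_at F (ideal_of x))) I ->
  prod_colon (fun j => (j != i) && (j != j0)) I F x.
Proof.
move=> ij0 sI z Fz; pose z' j := if j == j0 then x else z j.
have : I (\prod_(j | j != i) z' j).
  apply: sI; apply: prod_ideals_gen => j ji; rewrite /replace_at /z'.
  by case: eqP => [_|/eqP nj0]; [exists 1; rewrite mul1r | apply: Fz; rewrite ji].
rewrite (bigD1 j0) 1?eq_sym //= /z' eqxx.
by congr (I (_ * _)); apply: eq_bigr => j /andP [_ /negbTE ->].
Qed.

Lemma colon_prod_omit (F : 'I_n.+1 -> R -> Prop) I (i : 'I_n.+1) :
  is_ideal I -> i != j0 ->
  subideal (F j0) (prod_colon (fun j => (j != i) && (j != j0)) I F) ->
  subideal (prod_ideals (fun j => j != i) F) I.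
Proof.
move=> iI ij0 sF; apply: prod_ideals_sub => // z Fz.
rewrite (bigD1 j0) 1?eq_sym //=.
by apply: sF; [apply: Fz; rewrite eq_sym | move=> j /andP [ji _]; apply: Fz].
Qed.

Lemma absorb_by_principal_replacement (F : 'I_n.+1 -> R -> Prop) I :
  is_ideal I -> u_ideal (F j0) ->
  (forall x, F j0 x -> exists2 i, i != j0 &
     subideal (prod_ideals (fun j => j != i) (replace_at F (ideal_of x))) I) ->
  exists i, subideal (prod_ideals (fun j => j != i) F) I.
Proof.
move=> iI [_ uF0] replace.
pose colon (i : 'I_n) := prod_colon (fun j => (j != lift j0 i) && (j != j0)) I F.
have cover x : F j0 x -> exists i, colon i x.
  move=> Fx; have [i ij0 sI] := replace x Fx.
  have [i' ei|ei] := unliftP j0 i; last by rewrite ei eqxx in ij0.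
  by exists i'; rewrite /colon -ei; apply: replace_omit_colon.
have [i sF] := uF0 n colon (fun i => prod_colon_is_ideal _ _ iI) cover.
by exists (lift j0 i); apply: colon_prod_omit => //; rewrite eq_sym neq_lift.
Qed.

End Replace.
End Ideals.

Theorem lemma5 (R : comNzRingType) (n k : nat) (I : R -> Prop) :
  (1 <= n)%N -> (k <= n)%N -> n_absorbing n I ->
  absorbs_uideals n k.+1 I -> absorbs_uideals n k I.
Proof.
move=> _ kn [iI _] absorb_k1 F uF [S [kS pS]] sub.
have [k1S|small_S] := leqP k.+1 #|S|; first by apply: absorb_k1 => //; exists S.
have [j0 j0S] : exists j0, j0 \notin S.
  apply/existsP; rewrite -negb_forall; apply: contraTN small_S => /forallP allS.
  have -> : S = setT by apply/setP => j; rewrite inE allS.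
  by rewrite cardsT card_ord -leqNgt ltnS.
have [omit_j0|not_omit_j0] := classic
  (subideal (prod_ideals (fun j => j != j0) F) I); first by exists j0.
apply: (absorb_by_principal_replacement (j0 := j0) iI (uF j0)) => x Fx.
have [i sI] : exists i, subideal (prod_ideals (fun j => j != i)
                                 (replace_at j0 F (ideal_of x))) I.
  apply: absorb_k1.
  - by move=> j; rewrite /replace_at; case: eqP => _; [apply: ideal_of_u_ideal|apply: uF].
  - exists (j0 |: S); split; first by rewrite cardsU1 j0S.
    move=> j; rewrite in_setU1 /replace_at; case: eqP => [_ _|_ /= /pS //].
    exact: ideal_of_principal.
  - have [iF0 _] := uF j0.
    by move=> y /(prod_replace_sub (ideal_of_sub iF0 Fx)) Fy; apply: sub.
exists i => //; apply: contra_notN not_omit_j0 => /eqP ij0; subst i.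
by move=> y /(prod_replace_omit (G := ideal_of x)) /sI.
Qed.
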